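(* Let $H$ be an NCI-hypergraph and let $e=\{x_1,\dots,x_n\}$ be a hyperedge of $H$. Then $N(x_1)=N(x_2)=\dots=N(x_n)$.
   Context: A simple hypergraph is a pair $H=(V,E)$, $V$ finite, $E\subseteq 2^V$, assumed minimal (no edge properly contains another); $2$-element edges are called edges and $k$-edges with $k\ge 3$ are called hyperedges. For $v\in V$, $N(v)=\{w:\{v,w\}\in E\}$ is its set of $2$-neighbors. The edge ideal $I(H)$ is the squarefree monomial ideal in $k[V]$ ($k$ a field) generated by $\prod_{v\in e}v$, $e\in E$. A nearly complete intersection is a squarefree monomial ideal $I$ that is not a complete intersection such that for every variable $x$ in the support of $I$, $I(x=1)$ (substituting $x=1$ in the generators) is a complete intersection. $H$ is an NCI-hypergraph if $I(H)$ is a nearly complete intersection. *)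

From mathcomp Require Import all_boot.
Set Implicit Arguments. Unset Strict Implicit. Unset Printing Implicit Defensive.

(* Squarefree monomials in k[V] are identified with their supports (finite
   subsets of V); a squarefree monomial ideal is given by a finite set of
   monomial generators G : {set {set V}}.  Divisibility of squarefree
   monomials is inclusion of supports. *)

Section Hyper.
Variable V : finType.

Definition simple_hypergraph (E : {set {set V}}) : Prop :=
  forall e f, e \in E -> f \in E -> ~~ (e \proper f).

Definition nbhd (E : {set {set V}}) (v : V) : {set V} :=
  [set w | (w != v) && ([set v; w] \in E)].

(* generators of the edge ideal I(H): the monomials prod_{v in e} v *)
Definition edge_ideal_gens (E : {set {set V}}) : {set {set V}} := E.

Definition mingens (G : {set {set V}}) : {set {set V}} :=
  [set g in G | [forall h in G, ~~ (h \proper g)]].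

Definition ideal_support (G : {set {set V}}) : {set V} :=
  \bigcup_(g in mingens G) g.

(* substituting x = 1 in the generators *)
Definition subst1 (G : {set {set V}}) (x : V) : {set {set V}} :=
  [set g :\ x | g in G].

(* a monomial ideal is a complete intersection iff its minimal monomial
   generators have pairwise disjoint supports *)
Definition complete_intersection (G : {set {set V}}) : Prop :=
  forall g h, g \in mingens G -> h \in mingens G -> g != h -> [disjoint g & h].

Definition nearly_complete_intersection (G : {set {set V}}) : Prop :=
  ~ complete_intersection G /\
  forall x, x \in ideal_support G -> complete_intersection (subst1 G x).

Definition NCI_hypergraph (E : {set {set V}}) : Prop :=
  simple_hypergraph E /\ nearly_complete_intersection (edge_ideal_gens E).

End Hyper.

From mathcomp Require Import all_boot.

(* Let {x, w} be an edge with x in the hyperedge e, and let y be another vertex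
   of e.  Setting y = 1, the set e \ y stays a minimal generator and contains x,
   while the image of {x, w} contains some minimal generator g \ y.  Complete
   intersection forces x outside g \ y, so g \ y lies in {w}; simplicity then
   leaves only g = {y, w}, i.e. w is a 2-neighbour of y. *)

Set Implicit Arguments. Unset Strict Implicit. Unset Printing Implicit Defensive.

Lemma subset_set2_notin (T : finType) (A : {set T}) (a b : T) :
  A \subset [set a; b] -> a \notin A -> A \subset [set b].
Proof.
move=> Aab aNA; apply/subsetP => z zA; have := subsetP Aab z zA; rewrite !inE.
by case/orP => // /eqP za; rewrite -za zA in aNA.
Qed.

Lemma subD1_set2_card (T : finType) (A : {set T}) (a b c : T) :
  a \in A -> c \notin A -> A :\ a \subset [set b; c] -> #|A| <= 2.
Proof.
move=> aA cNA Abc; rewrite (cardsD1 a) aA add1n ltnS -(cards1 b) subset_leq_card //.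
apply: (subset_set2_notin (a := c)); first by rewrite setUC.
by rewrite !inE (negbTE cNA) andbF.
Qed.

Lemma mingens_sub (V : finType) (G : {set {set V}}) : mingens G \subset G.
Proof. by apply/subsetP => g; rewrite inE => /andP []. Qed.

Lemma exists_mingens_sub (V : finType) (G : {set {set V}}) (g : {set V}) :
  g \in G -> exists2 h, h \in mingens G & h \subset g.
Proof.
move=> gG; pose P : pred {set V} := fun h => (h \in G) && (h \subset g).
have Pg : P g by rewrite /P gG subxx.
have [h /andP [hG hg] h_min] := arg_minnP (fun h : {set V} => #|h|) Pg.
exists h => //; rewrite inE hG; apply/forall_inP => k kG; apply/negP => kh.
have := h_min k; rewrite /P kG (subset_trans (proper_sub kh) hg) => /(_ isT).
by rewrite leqNgt proper_card.
Qed.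

Section SimpleHypergraph.
Variables (V : finType) (E : {set {set V}}).
Hypothesis simpleE : simple_hypergraph E.

Lemma simple_edge_subset_card f e :
  f \in E -> e \in E -> f \subset e -> #|e| <= #|f|.
Proof. by move=> fE eE fe; have := simpleE fE eE; rewrite properEcard fe -leqNgt. Qed.

Lemma mingens_simple : mingens E = E.
Proof.
apply/setP => e; rewrite inE andb_idr // => eE.
by apply/forall_inP => f fE; apply: simpleE fE eE.
Qed.

Lemma edge_sub_ideal_support e : e \in E -> e \subset ideal_support E.
Proof. by move=> eE; rewrite /ideal_support mingens_simple; apply: bigcup_sup. Qed.

Lemma edgeD1_mingens_subst1 e y :
  e \in E -> y \in e -> e :\ y \in mingens (subst1 E y).
Proof.
move=> eE ye; rewrite inE (imset_f (fun g => g :\ y) eE) /=.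
apply/forall_inP => _ /imsetP [g gE ->]; apply/negP => gey.
have ge : g \subset e by rewrite -(setD1K ye) -subDset (proper_sub gey).
have gNe : g != e by apply: contraTneq gey => ->; rewrite properxx.
by have := simpleE gE eE; rewrite properEneq gNe ge.
Qed.

Lemma edge_sub1_card f g a :
  f \in E -> g \in E -> a \in f -> g \subset [set a] -> #|f| <= 1.
Proof.
move=> fE gE af ga; have gf : g \subset f by rewrite (subset_trans ga) ?sub1set.
by rewrite -(cards1 a) (leq_trans (simple_edge_subset_card gE fE gf)) ?subset_leq_card.
Qed.

Lemma edge_sub_set2 f1 f2 g a b :
  f1 \in E -> f2 \in E -> a \in f1 -> b \in f2 -> 1 < #|f1| -> 1 < #|f2| ->
  g \in E -> g \subset [set a; b] -> g = [set a; b].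
Proof.
move=> f1E f2E af1 bf2 f1_gt1 f2_gt1 gE gab.
apply/eqP; rewrite eqEsubset gab subUset !sub1set /=.
apply/andP; split; apply: contraT => Ng.
  have := edge_sub1_card f2E gE bf2 (subset_set2_notin gab Ng).
  by rewrite leqNgt f2_gt1.
have gba : g \subset [set b; a] by rewrite setUC.
have := edge_sub1_card f1E gE af1 (subset_set2_notin gba Ng).
by rewrite leqNgt f1_gt1.
Qed.

Lemma nbhd_notin_hyperedge e x w :
  e \in E -> 3 <= #|e| -> x \in e -> w \in nbhd E x -> w \notin e.
Proof.
move=> eE e_ge3 xe; rewrite inE => /andP [_ xwE].
apply: contraTN e_ge3 => we; rewrite -ltnNge ltnS.
apply: leq_trans (simple_edge_subset_card xwE eE _) _.
  by rewrite subUset !sub1set xe.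
by rewrite cards2 ltnS leq_b1.
Qed.

Lemma nbhd_sub_hyperedge e x y :
  e \in E -> 3 <= #|e| -> x \in e -> y \in e ->
  complete_intersection (subst1 E y) -> nbhd E x \subset nbhd E y.
Proof.
move=> eE e_ge3 xe ye CIy; have [<-|xy] := eqVneq x y; first exact: subxx.
apply/subsetP => w wNx; have wNe := nbhd_notin_hyperedge eE e_ge3 xe wNx.
move: wNx; rewrite !inE => /andP [wx xwE].
have wy : w != y by apply: contraNneq wNe => ->.
have xw_y : [set x; w] :\ y = [set x; w].
  by apply/setDidPl; rewrite disjoint_sym disjoints1 !inE negb_or eq_sym xy eq_sym.
have [m mM mxw] := exists_mingens_sub (imset_f (fun g => g :\ y) xwE).
rewrite xw_y in mxw.
have /imsetP [g gE mE] := subsetP (mingens_sub _) m mM.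
have xNm : x \notin m.
  apply/negP => xm; have eyM := edgeD1_mingens_subst1 eE ye.
  have [eym|] := eqVneq (e :\ y) m; last first.
    by move/(CIy _ _ eyM mM)/disjointFl/(_ xm); rewrite !inE xy xe.
  by have := subD1_set2_card ye wNe; rewrite eym leqNgt e_ge3 => /(_ x mxw).
have gyw : g \subset [set y; w].
  by rewrite -subDset -mE (subset_set2_notin mxw xNm).
have xw_gt1 : 1 < #|[set x; w]| by rewrite cards2 eq_sym wx.
have e_gt1 : 1 < #|e| by apply: ltnW.
have wxw : w \in [set x; w] by rewrite !inE eqxx orbT.
by rewrite wy -(edge_sub_set2 eE xwE ye wxw e_gt1 xw_gt1 gE gyw).
Qed.

End SimpleHypergraph.

Theorem lemma3p3 (V : finType) (E : {set {set V}}) (e : {set V}) :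
  NCI_hypergraph E -> e \in E -> 3 <= #|e| ->
  forall x y, x \in e -> y \in e -> nbhd E x = nbhd E y.
Proof.
move=> [simpleE [_ CI]] eE e_ge3 x y xe ye.
have CIe z : z \in e -> complete_intersection (subst1 E z).
  by move=> ze; apply: CI; apply: subsetP (edge_sub_ideal_support simpleE eE) z ze.
by apply/eqP; rewrite eqEsubset; apply/andP; split;
  apply: (nbhd_sub_hyperedge simpleE eE e_ge3) => //; apply: CIe.
Qed.
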